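(* Let $G$ be a compact abelian group with discrete dual group $\Gamma$, let $E \subset \Gamma$, $n \in \mathbb{N}$ and $p$ a prime number. The following are equivalent: (1) $E$ is $p^n$-PR; (2) for all $1 \le k \le n$, the map $\pi_{p^k}$ is one-to-one on $E$ and $\pi_{p^k}(E)$ is $p^{n+1-k}$-PR as a subset of $\Gamma/\Gamma_{p^k}$; (3) for some $1 \le k \le n$, the map $\pi_{p^k}$ is one-to-one on $E$ and $\pi_{p^k}(E)$ is $p^{n+1-k}$-PR as a subset of $\Gamma/\Gamma_{p^k}$.
   Context: Characters are written multiplicatively; $\mathbb{Z}_N$ is identified with the $N$-th roots of unity in the unit circle $\mathbb{T}$. For a discrete abelian group $\Delta$ with compact dual $\widehat{\Delta}$, a subset $E \subset \Delta$ is $N$-PR if for every function $\varphi: E \to \mathbb{Z}_N$ there exists $x \in \widehat{\Delta}$ with $\varphi(\gamma) = \gamma(x)$ for all $\gamma \in E$. Let $\Gamma_0$ be the torsion subgroup of $\Gamma$; for a prime $p$ and $k \in \mathbb{N}$, $\Gamma_{p^k}$ is the subgroup of $\Gamma_0$ of elements whose order is not divisible by $p^k$, and $\pi_{p^k}: \Gamma \to \Gamma/\Gamma_{p^k}$ is the quotient map. *)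

From mathcomp Require Import all_boot all_algebra.
From mathcomp Require Import reals.
From mathcomp.real_closed Require Import complex.
Set Implicit Arguments. Unset Strict Implicit. Unset Printing Implicit Defensive.
Import GRing.Theory Num.Theory.
Local Open Scope ring_scope.

(* The circle group T is {z : R[i] | |z| = 1} (R : realType, R[i] the complex
   numbers), written multiplicatively.  A discrete abelian group is a zmodType
   (written additively).  The dual of Delta is the group of characters
   Delta -> T (every homomorphism is continuous since Delta is discrete). *)

Definition is_character (R : realType) (D : zmodType) (chi : D -> R[i]) : Prop :=
  (forall x, `|chi x| = 1) /\ (forall x y, chi (x + y) = chi x * chi y).

(* Z_N is identified with the N-th roots of unity in T. *)
Definition PR (R : realType) (N : nat) (D : zmodType) (E : D -> Prop) : Prop :=
  forall phi : D -> R[i], (forall g, E g -> phi g ^+ N = 1) ->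
    exists chi : D -> R[i], is_character chi /\ (forall g, E g -> chi g = phi g).

Definition is_order (D : zmodType) (g : D) (m : nat) : Prop :=
  (0 < m)%N /\ g *+ m = 0 /\ (forall j, (0 < j)%N -> (j < m)%N -> g *+ j != 0).

Definition Gamma_pk (D : zmodType) (p k : nat) (g : D) : Prop :=
  exists m, is_order g m /\ ~~ (p ^ k %| m)%N.

(* pi is a quotient map D -> Q with kernel H (so Q is D/H up to iso) *)
Definition is_quotient_map (D Q : zmodType) (H : D -> Prop) (pi : D -> Q) : Prop :=
  (forall x y, pi (x + y) = pi x + pi y) /\
  (forall q, exists x, pi x = q) /\
  (forall x, pi x = 0 <-> H x).

Definition injective_on (A B : Type) (E : A -> Prop) (f : A -> B) : Prop :=
  forall x y, E x -> E y -> f x = f y -> x = y.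

Definition image_set (A B : Type) (f : A -> B) (E : A -> Prop) : B -> Prop :=
  fun b => exists2 a, E a & f a = b.

From HB Require Import structures.
From mathcomp Require Import all_boot all_algebra cyclic separable cyclotomic.
From mathcomp Require Import reals.
From mathcomp.real_closed Require Import complex.
From mathcomp Require Import boolp classical_sets.
From mathcomp Require Import zify.

(* Both conditions are first reduced to a condition on integer relations: E is
   N-PR iff every relation \sum_x a_x x = 0 among distinct elements of E has
   N | a_x for all x.  Necessity: prescribe a primitive N-th root of unity at one
   point of E and 1 at the others.  Sufficiency: the prescription is then well
   defined on the subgroup generated by E, and it extends to the whole group
   because the circle group is divisible (Zorn's lemma).
   Relations then transfer along pi = pi_{p^k}.  A relation in pi(E) lifts to an
   element of ker pi = Gamma_{p^k}, which is killed by some m with p^k not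
   dividing m; multiplying by m gives a relation in E, so p^n | a m and hence
   p^(n+1-k) | a.  Conversely, if p^i (i < n) divides all the coefficients of a
   relation in E, dividing them by p^(k-1) as far as possible leaves an element
   killed by a power of p below p^k, i.e. a relation in pi(E); divisibility of
   its coefficients by p^(n+1-k) forces p^(i+1) | a. *)

Set Implicit Arguments. Unset Strict Implicit. Unset Printing Implicit Defensive.
Import GRing.Theory Num.Theory.
Local Open Scope ring_scope.
Local Open Scope classical_set_scope.

Lemma norm_expz_eq1 (C : numFieldType) (z : C) (i : int) :
  `|z| = 1 -> `|z ^ i| = 1.
Proof.
move=> z1; case: i => n; first by rewrite -exprnP normrX z1 expr1n.
by rewrite NegzE -invr_expz normfV -exprnP normrX z1 expr1n invr1.
Qed.

Lemma big_restrict_uniq (R : Type) (idx : R) (op : Monoid.com_law idx)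
    (I : eqType) (r s : seq I) (F : I -> int -> R) (a : I -> int) :
  uniq r -> uniq s -> {subset r <= s} -> (forall i, F i 0 = idx) ->
  \big[op/idx]_(i <- s) F i (if i \in r then a i else 0) =
  \big[op/idx]_(i <- r) F i (a i).
Proof.
move=> Ur Us rs F0; rewrite (bigID (mem r)) /= [X in op _ X]big1 => [|i /negPf ->//].
rewrite Monoid.mulm1 (eq_bigr (fun i => F i (a i))) => [|i ->//].
rewrite -big_filter; apply: perm_big; apply: uniq_perm; rewrite ?filter_uniq //.
by move=> i; rewrite mem_filter andb_idr //; apply: rs.
Qed.

Definition independent_mod (D : zmodType) (N : nat) (E : D -> Prop) : Prop :=
  forall (u : seq D) (a : D -> int), uniq u -> (forall x, x \in u -> E x) ->
    \sum_(x <- u) x *~ a x = 0 -> forall x, x \in u -> (N%:Z %| a x)%Z.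

Section PartialCharacter.
Variables (C : numClosedFieldType) (D : zmodType).

(* The graph of a homomorphism from a subgroup of D to the unit circle of C: a
   subgroup of D * C^x, meeting 0 * C^x only in (0, 1), with values of norm 1. *)
Definition partial_char (A : set (D * C)) : Prop :=
  [/\ A (0, 1), forall u v, A u -> A v -> A (u.1 - v.1, u.2 / v.2),
      forall c, A (0, c) -> c = 1 & forall u, A u -> `|u.2| = 1].

Section Closure.
Variable A : set (D * C).
Hypothesis hA : partial_char A.

Lemma partial_charB x y a b : A (x, a) -> A (y, b) -> A (x - y, a / b).
Proof. by case: hA => _ hB _ _; exact: (hB (x, a) (y, b)). Qed.

Lemma partial_charN x c : A (x, c) -> A (- x, c^-1).
Proof. by case: hA => h1 _ _ _ /(partial_charB h1); rewrite sub0r div1r. Qed.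

Lemma partial_charD x y a b : A (x, a) -> A (y, b) -> A (x + y, a * b).
Proof.
by move=> Ax /partial_charN/(partial_charB Ax); rewrite opprK invrK.
Qed.

Lemma partial_charMz x c i : A (x, c) -> A (x *~ i, c ^ i).
Proof.
move=> Ax; have Mn n : A (x *+ n, c ^+ n).
  elim: n => [|n IHn]; first by rewrite mulr0n expr0; case: hA.
  by rewrite mulrS exprSr addrC; exact: partial_charD.
case: i => n; first by rewrite -pmulrn -exprnP; exact: Mn.
by rewrite NegzE mulrNz -invr_expz -pmulrn -exprnP; exact/partial_charN/Mn.
Qed.

Lemma partial_char_fun x a b : A (x, a) -> A (x, b) -> a = b.
Proof.
move=> Aa Ab; have := partial_charB Aa Ab; rewrite subrr; case: hA => _ _ h0 _.
by move/h0/divr1_eq.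
Qed.

Lemma partial_char_sum (u : seq D) (f : D -> C) (a : D -> int) :
  (forall x, x \in u -> A (x, f x)) ->
  A (\sum_(x <- u) x *~ a x, \prod_(x <- u) f x ^ a x).
Proof.
elim: u => [|y u IHu] Au; first by rewrite !big_nil; case: hA.
rewrite !big_cons; apply: partial_charD; first by apply/partial_charMz/Au; rewrite mem_head.
by apply: IHu => x xu; apply: Au; rewrite in_cons xu orbT.
Qed.

Lemma partial_char_root (g : D) :
  exists2 w : C, `|w| = 1 & forall i c, A (g *~ i, c) -> c = w ^ i.
Proof.
(* The i with g *~ i in the domain of A are the multiples of the least m > 0 with
   g *+ m in it (or just 0); w is an m-th root of the value at g *+ m. *)
pose P m := `[< (0 < m)%N /\ exists c, A (g *+ m, c) >].
have [exP|noP] := pselect (exists m, P m).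
  case: (ex_minnP exP) => m /asboolP[m_gt0 [c Ac]] m_min.
  have wK : (m.-root c) ^+ m = c by rewrite rootCK.
  exists (m.-root c).
    apply/eqP; rewrite -(pexpr_eq1 m_gt0) // -normrX wK.
    by apply/eqP; case: hA => _ _ _ /(_ _ Ac).
  have Amq (q : int) : A (g *~ (q * m), c ^ q).
    by rewrite mulrC mulrzA -pmulrn; exact: partial_charMz.
  move=> i d Ad; have := partial_charB Ad (Amq (i %/ m)%Z).
  rewrite -mulrzBr {1}(divz_eq i m) addrAC subrr add0r => Ar.
  have r0 : (i %% m)%Z = 0.
    have r_ge0 : 0 <= (i %% m)%Z by apply: modz_ge0; rewrite eqz_nat -lt0n.
    have r_lt : (i %% m)%Z < m by apply: ltz_pmod; rewrite ltz_nat.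
    move: Ar r_ge0 r_lt; case: (i %% m)%Z => [[|r]|r] // Ar _; rewrite ltz_nat => lt_rm.
    suff /m_min : P r.+1 by rewrite leqNgt lt_rm.
    by apply/asboolP; split=> //; exists (d / c ^ (i %/ m)%Z); rewrite pmulrn.
  rewrite (divz_eq i m) r0 addr0 in Ad *.
  by rewrite (partial_char_fun Ad (Amq _)) -{1}wK exprnP exprz_exp mulrC.
exists 1; first exact: normr1.
have Ag0 : forall n c, A (g *+ n.+1, c) -> False.
  by move=> n c Ac; apply: noP; exists n.+1; apply/asboolP; split=> //; exists c.
case=> [[|n]|n] c Ac.
- by rewrite expr0z; case: hA => _ _ h0 _; apply: h0; rewrite -(mulr0z g).
- by case: (Ag0 n c); rewrite pmulrn.
- by case: (Ag0 n c^-1); move/partial_charN: Ac; rewrite NegzE mulrNz opprK pmulrn.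
Qed.

Lemma partial_char_adjoin (g : D) :
  exists A' : set (D * C), [/\ partial_char A', A `<=` A' & exists c, A' (g, c)].
Proof.
have [w w1 wA] := partial_char_root g.
have w0 : w != 0 by rewrite -normr_eq0 w1 oner_eq0.
have A01 : A (0, 1) by case: hA.
exists [set v | exists x c i, A (x, c) /\ v = (x + g *~ i, c * w ^ i)]; split.
- split.
  + by exists 0, 1, 0; rewrite mulr0z addr0 expr0z mulr1.
  + move=> _ _ [x1 [c1 [i1 [A1 ->]]]] [x2 [c2 [i2 [A2 ->]]]] /=.
    exists (x1 - x2), (c1 / c2), (i1 - i2); split; first exact: partial_charB.
    rewrite mulrzBr opprD addrACA expfzDr // -invr_expz invfM.
    by rewrite [c1 / c2 * _]mulrACA.
  + move=> c [x [d [i [Ax [x_eq ->]]]]].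
    have : A (g *~ (- i), d).
      by rewrite mulrNz (_ : - _ = x) //; apply/eqP; rewrite eq_sym -addr_eq0 -x_eq.
    by move/wA => ->; rewrite -expfzDr // addNr expr0z.
  + move=> _ [x [c [i [Ax ->]]]] /=.
    by rewrite normrM norm_expz_eq1 // mulr1; case: hA => _ _ _ /(_ _ Ax).
- by move=> [x c] Ax; exists x, c, 0; rewrite mulr0z addr0 expr0z mulr1.
- by exists w, 0, 1, 1; rewrite add0r mul1r mulr1z expr1z.
Qed.

End Closure.

Lemma partial_char_directed (U : set (D * C)) : U (0, 1) ->
    (forall u v, U u -> U v ->
       exists B, [/\ partial_char B, B `<=` U, B u & B v]) ->
  partial_char U.
Proof.
move=> U01 dirU; split=> //.
- by move=> u v Uu Uv; have [B [[_ hB _ _] /(_ _ (hB _ _ _ _))]] := dirU u v Uu Uv; apply.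
- by move=> c /(dirU _ _ U01) => -[B [[_ _ h0 _] _ _ /h0]].
- by move=> u Uu; have [B [[_ _ _ hn] _ /hn]] := dirU u u Uu Uu.
Qed.

Lemma partial_char_total (A0 : set (D * C)) : partial_char A0 ->
  exists A, [/\ partial_char A, A0 `<=` A & forall x, exists c, A (x, c)].
Proof.
move=> hA0.
pose T := {A : set (D * C) | partial_char A /\ A0 `<=` A}.
pose le (s t : T) := `[< sval s `<=` sval t >].
pose t0 : T := exist _ A0 (conj hA0 (@subset_refl _ A0)).
have le_t0 (t : T) : le t0 t by apply/asboolP; case: (svalP t).
have [t t_max] : exists t, premaximal le t.
  apply: (ZL_preorder t0) => [t|r s t /asboolP rs /asboolP st|F Ftot].
  - exact/asboolP.
  - by apply/asboolP; apply: subset_trans st.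
  pose U := \bigcup_(t in F `|` [set t0]) sval t.
  have U_pc : partial_char U.
    apply: partial_char_directed => [|u v [s Fs su] [t Ft tv]].
      by exists t0; [right | have [] := hA0].
    have [/asboolP st|/asboolP ts] : le s t \/ le t s.
      case: Fs Ft => [Fs|->] [Ft|->]; by [apply: Ftot | left | right].
    + exists (sval t); split=> //; last exact: st.
      * exact: (proj1 (svalP t)).
      * by move=> w; exists t.
    + exists (sval s); split=> //; last exact: ts.
      * exact: (proj1 (svalP s)).
      * by move=> w; exists s.
  have A0U : A0 `<=` U by move=> w A0w; exists t0 => //; right.
  by exists (exist _ U (conj U_pc A0U)) => s Fs; apply/asboolP => w sw; exists s => //; left.
have [t_pc A0t] := svalP t.
exists (sval t); split=> // x.
have [A' [A'_pc tA' [c A'c]]] := partial_char_adjoin t_pc x.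
pose t' : T := exist _ A' (conj A'_pc (subset_trans A0t tA')).
have /asboolP A't : le t' t by apply: t_max; apply/asboolP.
by exists c; apply: A't.
Qed.

Lemma partial_char_extend (A0 : set (D * C)) : partial_char A0 ->
  exists chi : D -> C, [/\ forall x, `|chi x| = 1,
    {morph chi : x y / x + y >-> x * y} & forall x c, A0 (x, c) -> chi x = c].
Proof.
move=> /partial_char_total[A [hA A0A Atot]].
pose chi x := projT1 (cid (Atot x)).
have Achi x : A (x, chi x) by rewrite /chi; case: cid.
exists chi; split.
- by move=> x; case: hA => _ _ _ /(_ _ (Achi x)).
- by move=> x y; apply: (partial_char_fun hA (Achi _)); apply: partial_charD.
- by move=> x c /A0A Ac; apply: (partial_char_fun hA (Achi _)).
Qed.

Lemma partial_char_graph (chi : D -> C) : (forall x, `|chi x| = 1) ->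
  {morph chi : x y / x + y >-> x * y} -> partial_char [set v | chi v.1 = v.2].
Proof.
move=> chi1 chiD.
have chi0 x : chi x != 0 by rewrite -normr_eq0 chi1 oner_eq0.
have chiB x y : chi (x - y) = chi x / chi y.
  by apply: (mulIf (chi0 y)); rewrite -chiD subrK divfK.
have chi_0 : chi 0 = 1 by rewrite -(subrr (0 : D)) chiB divff.
by split=> [|[x a] [y b] /= <- <-|c /= <-|[x a] /= <-].
Qed.

Lemma character_sum (chi : D -> C) (u : seq D) (a : D -> int) :
    (forall x, `|chi x| = 1) -> {morph chi : x y / x + y >-> x * y} ->
  chi (\sum_(x <- u) x *~ a x) = \prod_(x <- u) chi x ^ a x.
Proof.
by move=> chi1 chiD; apply: (partial_char_sum (partial_char_graph chi1 chiD)).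
Qed.

End PartialCharacter.

Section SpanGraph.
Variables (C : numClosedFieldType) (D : zmodType) (E : D -> Prop) (phi : D -> C).

Definition span_graph : set (D * C) :=
  [set v | exists (u : seq D) (a : D -> int), [/\ uniq u, forall x, x \in u -> E x &
     v = (\sum_(x <- u) x *~ a x, \prod_(x <- u) phi x ^ a x)]].

Lemma span_graphB v w : (forall x, E x -> phi x != 0) ->
  span_graph v -> span_graph w -> span_graph (v.1 - w.1, v.2 / w.2).
Proof.
move=> phi0 [u1 [a1 [U1 E1 ->]]] [u2 [a2 [U2 E2 ->]]] /=.
set u := undup (u1 ++ u2).
have [Uu s1 s2] : [/\ uniq u, {subset u1 <= u} & {subset u2 <= u}].
  by split=> [|x|x]; rewrite ?undup_uniq // mem_undup mem_cat => ->; rewrite ?orbT.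
have Eu x : x \in u -> E x by rewrite mem_undup mem_cat => /orP[/E1|/E2].
pose r1 x := if x \in u1 then a1 x else 0.
pose r2 x := if x \in u2 then a2 x else 0.
exists u, (fun x => r1 x - r2 x); split=> //; congr (_, _); apply/esym.
  rewrite (eq_bigr (fun x => x *~ r1 x - x *~ r2 x)) ?sumrB => [|x _]; last by rewrite mulrzBr.
  by rewrite !big_restrict_uniq.
rewrite (eq_big_seq (fun x => phi x ^ r1 x / phi x ^ r2 x)) => [|x xu]; last first.
  by rewrite expfzDr -?invr_expz //; apply/phi0/Eu.
by rewrite big_split prodfV /= !(big_restrict_uniq _ (F := fun x j => phi x ^ j)).
Qed.

Lemma partial_char_span_graph (N : nat) : (0 < N)%N ->
    (forall x, E x -> phi x ^+ N = 1) -> independent_mod N E ->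
  partial_char span_graph.
Proof.
move=> N_gt0 phiN indE.
have phi1 x : E x -> `|phi x| = 1.
  by move=> Ex; apply/eqP; rewrite -(pexpr_eq1 N_gt0) // -normrX phiN ?normr1.
have phi0 x : E x -> phi x != 0 by move/phi1; rewrite -normr_eq0 => ->; rewrite oner_eq0.
split.
- by exists [::], (fun=> 0%Z); rewrite !big_nil.
- by move=> u v; apply: span_graphB.
- move=> c [u [a [Uu Eu [/esym/indE dvdN ->]]]].
  rewrite big1_seq // => x /andP[_ xu]; have /divzK <- := dvdN Uu Eu x xu.
  by rewrite mulrC -exprz_exp -exprnP phiN ?exp1rz //; apply: Eu.
- move=> _ [u [a [_ Eu ->]]] /=; rewrite normr_prod big1_seq // => x /andP[_ xu].
  by rewrite norm_expz_eq1 //; apply/phi1/Eu.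
Qed.

End SpanGraph.

Lemma prim_root_exists (C : numClosedFieldType) (N : nat) :
  (0 < N)%N -> exists z : C, N.-primitive_root z.
Proof.
move=> N_gt0; have [r Dr] := closed_field_poly_normal ('X^N - 1 : {poly C}).
rewrite (monicP (monicXnsubC 1 N_gt0)) scale1r in Dr.
have /hasP[z _ ?] : has N.-primitive_root r; last by exists z.
apply: has_prim_root => //.
- by apply/allP => z; rewrite -root_prod_XsubC -Dr.
- by rewrite -separable_prod_XsubC -Dr separable_Xn_sub_1 // pnatr_eq0 -lt0n.
- by rewrite -ltnS -(size_prod_XsubC r id) -Dr size_XnsubC.
Qed.

Lemma prim_root_expz_eq1 (C : fieldType) (N : nat) (z : C) (i : int) :
  N.-primitive_root z -> (z ^ i == 1) = (N%:Z %| i)%Z.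
Proof.
move=> z_prim; case: i => n; first by rewrite -exprnP -(prim_order_dvd z_prim).
by rewrite NegzE -invr_expz invr_eq1 -exprnP -(prim_order_dvd z_prim).
Qed.

Lemma independent_mod_PR (R : realType) (D : zmodType) (N : nat) (E : D -> Prop) :
  (0 < N)%N -> independent_mod N E -> PR R N E.
Proof.
move=> N_gt0 indE phi phiN.
have [chi [chi1 chiD chiE]] :=
  partial_char_extend (partial_char_span_graph N_gt0 phiN indE).
exists chi; split=> [|g Eg]; first by split.
apply: chiE; exists [:: g], (fun=> 1%Z); split=> //.
- by move=> x; rewrite inE => /eqP ->.
- by rewrite !big_seq1 mulr1z expr1z.
Qed.

Lemma PR_independent_mod (R : realType) (D : zmodType) (N : nat) (E : D -> Prop) :
  (0 < N)%N -> PR R N E -> independent_mod N E.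
Proof.
move=> N_gt0 PRE u a Uu Eu rel x0 x0u.
have [z z_prim] := prim_root_exists R[i] N_gt0.
pose phi y := if y == x0 then z else 1.
have [chi [[chi1 chiD] chiE]] :
    exists chi, is_character chi /\ forall g, E g -> chi g = phi g.
  apply: PRE => g _; rewrite /phi.
  by case: eqP => _; rewrite ?(prim_expr_order z_prim) ?expr1n.
have chi0 : chi 0 = 1 by have := character_sum [::] a chi1 chiD; rewrite !big_nil.
have := character_sum u a chi1 chiD; rewrite rel chi0.
rewrite (eq_big_seq (fun x => phi x ^ a x)) => [|x xu]; last by rewrite chiE //; apply: Eu.
rewrite (big_rem x0) //= big1_seq => [|y /andP[_ yx0]]; last first.
  move: yx0; rewrite mem_rem_uniq // inE => /andP[/negPf y_neq_x0 _].
  by rewrite /phi y_neq_x0 exp1rz.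
by rewrite /phi eqxx mulr1 => /esym/eqP; rewrite (prim_root_expz_eq1 _ z_prim).
Qed.

Section ImageRelations.
Variables (D Q : zmodType) (pi : {additive D -> Q}) (E : D -> Prop).

Definition preim_pick (y : Q) : D :=
  if pselect (image_set pi E y) is left e then s2val (cid2 e) else 0.

Lemma preim_pickP y : image_set pi E y -> E (preim_pick y) /\ pi (preim_pick y) = y.
Proof. by rewrite /preim_pick; case: pselect => // e _; case: cid2. Qed.

Lemma preim_pickK x : injective_on E pi -> E x -> preim_pick (pi x) = x.
Proof.
move=> pi_inj Ex; have [El piK] := @preim_pickP (pi x) (ex_intro2 _ _ x Ex erefl).
exact: pi_inj.
Qed.

Lemma relation_lift (v : seq Q) (b : Q -> int) :
    uniq v -> (forall y, y \in v -> image_set pi E y) ->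
  [/\ uniq (map preim_pick v), forall x, x \in map preim_pick v -> E x &
      pi (\sum_(x <- map preim_pick v) x *~ b (pi x)) = \sum_(y <- v) y *~ b y].
Proof.
move=> Uv Ev; have piK y : y \in v -> pi (preim_pick y) = y by move/Ev/preim_pickP => [].
split.
- by rewrite map_inj_in_uniq // => y1 y2 /piK e1 /piK e2 e12; rewrite -e1 -e2 e12.
- by move=> x /mapP[y /Ev/preim_pickP[]] ? _ ->.
- by rewrite raddf_sum big_map; apply: eq_big_seq => y yv; rewrite raddfMz piK.
Qed.

Lemma relation_image (u : seq D) (a : D -> int) :
    injective_on E pi -> uniq u -> (forall x, x \in u -> E x) ->
  [/\ uniq (map pi u), forall y, y \in map pi u -> image_set pi E y &
      \sum_(y <- map pi u) y *~ a (preim_pick y) = pi (\sum_(x <- u) x *~ a x)].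
Proof.
move=> pi_inj Uu Eu; split.
- by rewrite map_inj_in_uniq // => x1 x2 /Eu E1 /Eu E2; apply: pi_inj.
- by move=> _ /mapP[x xu ->]; exists x; first exact: Eu.
- rewrite raddf_sum big_map; apply: eq_big_seq => x xu.
  by rewrite raddfMz preim_pickK //; apply: Eu.
Qed.

End ImageRelations.

Lemma order_exists (D : zmodType) (g : D) (c : nat) :
  (0 < c)%N -> g *+ c = 0 -> exists2 m, is_order g m & (m %| c)%N.
Proof.
move=> c_gt0 gc; pose P m := (0 < m)%N && (g *+ m == 0).
have exP : exists m, P m by exists c; rewrite /P c_gt0 gc eqxx.
case: (ex_minnP exP) => m /andP[m_gt0 /eqP gm] m_min.
have g_mod j : g *+ (j %% m)%N = g *+ j.
  by rewrite {2}(divn_eq j m) mulrnDr mulnC mulrnA gm mul0rn add0r.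
exists m.
  split=> //; split=> // j j_gt0 lt_jm.
  by apply: contraTneq lt_jm => gj; rewrite -leqNgt m_min // /P j_gt0 gj eqxx.
rewrite /dvdn eqn0Ngt; apply/negP => r_gt0.
have : P (c %% m)%N by rewrite /P r_gt0 g_mod gc eqxx.
by move/m_min; rewrite leqNgt ltn_pmod.
Qed.

Lemma Gamma_pk_pexp (D : zmodType) (p k j : nat) (g : D) :
  prime p -> (j < k)%N -> g *+ (p ^ j) = 0 -> Gamma_pk p k g.
Proof.
move=> p_prime lt_jk gpj.
have pj_gt0 : (0 < p ^ j)%N by rewrite expn_gt0 prime_gt0.
have [m m_ord m_dvd] := order_exists pj_gt0 gpj.
exists m; split=> //; apply: contraTN lt_jk => /dvdn_trans/(_ m_dvd).
by rewrite dvdn_Pexp2l ?prime_gt1 // -leqNgt.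
Qed.

Lemma dvdz_pexp_cancel (p k n m : nat) (b : int) :
    prime p -> ~~ (p ^ k %| m)%N -> ((p ^ n)%N%:Z %| b * m%:Z)%Z ->
  ((p ^ (n + 1 - k))%N%:Z %| b)%Z.
Proof.
move=> p_prime ndvd_m; have m_gt0 : (0 < m)%N by case: m ndvd_m; rewrite ?dvdn0.
rewrite !dvdzE abszM /=; have [->|b_neq0] := eqVneq `|b|%N 0%N; first by rewrite dvdn0.
have b_gt0 : (0 < `|b|)%N by rewrite lt0n.
move: ndvd_m; rewrite !pfactor_dvdn ?muln_gt0 ?b_gt0 // lognM // -ltnNge.
lia.
Qed.

Section PrimaryQuotient.
Variables (D Q : zmodType) (p k : nat) (pi : {additive D -> Q}) (E : D -> Prop).
Hypothesis p_prime : prime p.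
Hypothesis ker_pi : forall x, pi x = 0 <-> Gamma_pk p k x.
Local Notation preim_pick := (preim_pick pi E).

Lemma independent_mod_injective (n : nat) :
  (k <= n)%N -> independent_mod (p ^ n) E -> injective_on E pi.
Proof.
move=> le_kn indE x y Ex Ey pi_xy; apply/eqP/negP => /negP neq_xy.
have /ker_pi[m [[_ [mxy _]] ndvd_m]] : pi (x - y) = 0 by rewrite raddfB pi_xy subrr.
have Exy z : z \in [:: x; y] -> E z by rewrite !inE => /orP[] /eqP ->.
pose a z := if z == x then m%:Z else - m%:Z.
have rel : \sum_(z <- [:: x; y]) z *~ a z = 0.
  by rewrite big_cons big_seq1 /a eqxx eq_sym (negPf neq_xy) mulrNz -mulrzBl -pmulrn.
have := indE _ a _ Exy rel x; rewrite /a mem_head eqxx dvdzE /= inE neq_xy.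
by move=> /(_ isT isT)/(dvdn_trans (dvdn_exp2l p le_kn)); apply/negP.
Qed.

Lemma independent_mod_image (n : nat) :
  independent_mod (p ^ n) E -> independent_mod (p ^ (n + 1 - k)) (image_set pi E).
Proof.
move=> indE v b Uv Ev rel y yv.
have [Uu Eu pi_sum] := relation_lift b Uv Ev.
have /ker_pi[m [[_ [m_ann _]] ndvd_m]] :
  pi (\sum_(x <- map preim_pick v) x *~ b (pi x)) = 0 by rewrite pi_sum.
have rel_m : \sum_(x <- map preim_pick v) x *~ (b (pi x) * m%:Z) = 0.
  by rewrite -[RHS]m_ann -sumrMnl; apply: eq_bigr => x _; rewrite pmulrn mulrzA.
have := indE _ _ Uu Eu rel_m (preim_pick y) (map_f preim_pick yv).
by rewrite (preim_pickP (Ev _ yv)).2; apply: dvdz_pexp_cancel.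
Qed.

Section Preimage.
Variable n : nat.
Hypotheses (k_gt0 : (0 < k)%N) (le_kn : (k <= n)%N).
Hypothesis pi_inj : injective_on E pi.
Hypothesis indQ : independent_mod (p ^ (n + 1 - k)) (image_set pi E).

Lemma independent_mod_preimage_step (u : seq D) (a : D -> int) (i : nat) :
    uniq u -> (forall x, x \in u -> E x) -> \sum_(x <- u) x *~ a x = 0 ->
    (i < n)%N -> (forall x, x \in u -> ((p ^ i)%N%:Z %| a x)%Z) ->
  forall x, x \in u -> ((p ^ i.+1)%N%:Z %| a x)%Z.
Proof.
move=> Uu Eu rel lt_in dvd_a x xu.
(* With a = p^i b and e = i+1-k, the element \sum_y (p^e b_y) y is killed by
   p^(i-e), and i - e < k, so it lies in ker pi. *)
pose b y := (a y %/ (p ^ i)%N%:Z)%Z.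
have aE y : y \in u -> a y = b y * (p ^ i)%N%:Z by move=> yu; rewrite divzK ?dvd_a.
pose e := (i.+1 - k)%N; pose c y := b y * (p ^ e)%N%:Z.
have /ker_pi ker_c : Gamma_pk p k (\sum_(y <- u) y *~ c y).
  apply: (@Gamma_pk_pexp _ _ _ (i - e)) => //; first by rewrite /e; lia.
  rewrite -sumrMnl -[RHS]rel; apply: eq_big_seq => y yu.
  by rewrite pmulrn -mulrzA /c -mulrA -PoszM -expnD subnKC ?aE //; rewrite /e; lia.
have [Uv Ev rel_Q] := relation_image c pi_inj Uu Eu.
have := indQ Uv Ev (etrans rel_Q ker_c) (map_f pi xu).
rewrite /c (preim_pickK pi_inj (Eu x xu)) => /(dvdz_pexp_cancel (k := e.+1) p_prime).
rewrite dvdn_Pexp2l ?prime_gt1 // ltnn => /(_ isT) dvd_b.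
have p_dvd_b : (p%:Z %| b x)%Z.
  apply: dvdz_trans dvd_b; rewrite dvdzE /= -{1}(expn1 p) dvdn_exp2l //.
  by rewrite /e; lia.
by rewrite (aE x xu) expnSr PoszM mulrC dvdz_mul.
Qed.

Lemma independent_mod_preimage : independent_mod (p ^ n) E.
Proof.
move=> u a Uu Eu rel.
suff dvd_a i : (i <= n)%N -> forall x, x \in u -> ((p ^ i)%N%:Z %| a x)%Z by apply: dvd_a.
elim: i => [_ x _|i IHi lt_in]; first by rewrite expn0 dvd1z.
exact: independent_mod_preimage_step Uu Eu rel lt_in (IHi (ltnW lt_in)).
Qed.

End Preimage.

End PrimaryQuotient.

Lemma PR_independent_modE (R : realType) (D : zmodType) (N : nat) (E : D -> Prop) :
  (0 < N)%N -> PR R N E <-> independent_mod N E.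
Proof. by move=> N_gt0; split; [apply: PR_independent_mod | apply: independent_mod_PR]. Qed.

Lemma PR_primary_quotient (R : realType) (D Q : zmodType) (p k n : nat)
    (pi : {additive D -> Q}) (E : D -> Prop) :
    prime p -> (0 < k)%N -> (k <= n)%N ->
    (forall x, pi x = 0 <-> Gamma_pk p k x) ->
  PR R (p ^ n) E <-> injective_on E pi /\ PR R (p ^ (n + 1 - k)) (image_set pi E).
Proof.
move=> p_prime k_gt0 le_kn ker_pi.
have pexp_gt0 j : (0 < p ^ j)%N by rewrite expn_gt0 prime_gt0.
rewrite !PR_independent_modE //; split.
  move=> indE; split; first exact: independent_mod_injective le_kn indE.
  exact: independent_mod_image.
by case; apply: independent_mod_preimage.
Qed.

Lemma quotient_map_additive (D Q : zmodType) (K : D -> Prop) (pi : D -> Q) :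
  is_quotient_map K pi -> exists pi' : {additive D -> Q}, pi = pi'.
Proof.
case=> piD _; have piB : zmod_morphism pi.
  by move=> x y; apply/eqP; rewrite eq_sym subr_eq -piD subrK.
exists (HB.pack_for {additive D -> Q} pi (GRing.isZmodMorphism.Build _ _ pi piB)) => //.
Qed.

Theorem proposition3p2 (R : realType) (Gamma : zmodType) (n p : nat)
  (hn : (0 < n)%N) (hp : prime p)
  (Q : nat -> zmodType) (pi : forall k : nat, Gamma -> Q k)
  (hpi : forall k : nat, (0 < k)%N -> is_quotient_map (Gamma_pk p k) (pi k))
  (E : Gamma -> Prop) :
  (PR R (p ^ n) E <->
     (forall k : nat, (1 <= k <= n)%N ->
        injective_on E (pi k) /\ PR R (p ^ (n + 1 - k)) (image_set (pi k) E))) /\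
  (PR R (p ^ n) E <->
     (exists k : nat, (1 <= k <= n)%N /\
        injective_on E (pi k) /\ PR R (p ^ (n + 1 - k)) (image_set (pi k) E))).
Proof.
have PR_k k : (1 <= k <= n)%N -> PR R (p ^ n) E <->
    injective_on E (pi k) /\ PR R (p ^ (n + 1 - k)) (image_set (pi k) E).
  case/andP=> k_gt0 le_kn; have hk := hpi k k_gt0.
  have [piA piE] := quotient_map_additive hk.
  rewrite piE; apply: PR_primary_quotient => // x; rewrite -piE; exact: hk.2.2.
have n1 : (1 <= 1 <= n)%N by rewrite leqnn hn.
split; split.
- by move=> PRE k /PR_k/proj1; apply.
- by move=> PR_all; apply/(PR_k 1%N n1)/PR_all.
- by move=> PRE; exists 1%N; split=> //; apply/(PR_k 1%N n1).
- by move=> [k [/PR_k PR_k_iff PR_img]]; apply/PR_k_iff.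
Qed.
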